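(* Let $S_\psi\subset\mathbb{R}^3$ be the surface of revolution parametrized by $(r,\theta)\mapsto(\psi(r)\cos\theta,\psi(r)\sin\theta,\chi(r))$, $(r,\theta)\in[r_1,r_2]\times[0,2\pi)$, and let $\Omega=\{(\psi(r)\cos\theta,\psi(r)\sin\theta,\chi(r)) : r\in[0,a],\ \theta\in(0,2\pi]\}$ with $r_1\le0<a\le r_2$. Let $0<R_1<R_2<a$, $\beta>0$, $B>\overline B:=\max_{[0,a]}|(\psi'/\psi)'|$, let $z_1$ be the solution of $\big[\frac{(\psi z)'}{\psi}\big]'-Bz=0$ in $[0,R_1)$ with $z(0)=0$, $z'(0)=1$, let $z_2$ be the solution of the same equation in $(R_2,a]$ with $z(a)=\beta$, $z'(a)=-1$, and let $z=z_\beta$ be defined by $z=z_1$ on $[0,R_1)$, $z=z_3$ on $[R_1,R_2]$, $z=z_2$ on $(R_2,a]$, where $z_3$ is any positive smooth function such that $z$ is smooth on $[0,a]$. Then there exists $f\in C^1(\mathbb{R})$ such that $Z(r):=\int_0^rz(s)\,ds$ ($r\in[0,a]$) is a stationary solution of $$\Delta Z+f(Z)=0\text{ in }\Omega,\qquad\frac{\partial Z}{\partial\nu}+\alpha Z=0\text{ on }\partial\Omega,\qquad\text{with }\ \alpha=-\frac{\beta}{\int_0^az(r)\,dr},$$ and $Z$ satisfies $$L_a\big[H_a\alpha^2Z(a)^2+\alpha Z(a)f(Z(a))+\alpha^3Z(a)^2\big]+L_0\big[H_0\alpha^2Z(0)^2+\alpha Z(0)f(Z(0))+\alpha^3Z(0)^2\big]<0,$$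 where $L_0=2\pi\psi(0)$, $L_a=2\pi\psi(a)$, $H_a=-\frac{\psi'(a)}{\psi(a)}$, $H_0=\frac{\psi'(0)}{\psi(0)}$.
   Context: Here $r\mapsto(\psi(r),\chi(r))$ is a simple regular plane curve, $\psi\in C^2([r_1,r_2])$, $\psi>0$ on $[r_1,r_2]$, $(\psi')^2+(\chi')^2=1$, and $\chi'(0)>0$, $\chi'(a)>0$. $S_\psi$ carries the metric $dr^2+\psi(r)^2d\theta^2$, with Laplace–Beltrami operator $\Delta u=u_{rr}+\frac{\psi'}{\psi}u_r+\frac1{\psi^2}u_{\theta\theta}$; $\partial\Omega$ consists of the circles $r=0$ and $r=a$ with outer unit normal $\nu=-\partial_r$ on $r=0$ and $\nu=\partial_r$ on $r=a$. A radial function $Z(r)$ is viewed as a function on $\Omega$. *)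

From Stdlib Require Import Reals.
From Coquelicot Require Import Coquelicot.
Open Scope R_scope.

Definition C1_R (f : R -> R) : Prop :=
  forall x, ex_derive f x /\ continuous (Derive f) x.

Definition C2_R (f : R -> R) : Prop :=
  forall x, ex_derive f x /\ ex_derive (Derive f) x /\
            continuous (Derive (Derive f)) x.

(* Laplace--Beltrami operator of the metric dr^2 + psi(r)^2 dtheta^2,
   in the coordinates (r, theta):
   Delta u = u_rr + (psi'/psi) u_r + (1/psi^2) u_thth. *)
Definition LB (psi : R -> R) (u : R -> R -> R) (r th : R) : R :=
  Derive (fun s => Derive (fun t => u t th) s) r
  + Derive psi r / psi r * Derive (fun t => u t th) r
  + / (psi r ^ 2) * Derive (fun t => Derive (fun s => u r s) t) th.

Definition radial (Z : R -> R) : R -> R -> R := fun r _ => Z r.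

(* outer normal derivative on the two boundary circles r = 0 (nu = -d_r)
   and r = a (nu = d_r) *)
Definition dnu_0 (u : R -> R -> R) (th : R) : R :=
  - Derive (fun t => u t th) 0.
Definition dnu_a (a : R) (u : R -> R -> R) (th : R) : R :=
  Derive (fun t => u t th) a.

Definition stationary_solution (psi : R -> R) (a : R) (f : R -> R)
    (alpha : R) (Z : R -> R) : Prop :=
  (forall r, 0 <= r <= a -> ex_derive Z r /\ ex_derive (Derive Z) r) /\
  (forall r th, 0 <= r <= a -> 0 < th <= 2 * PI ->
     LB psi (radial Z) r th + f (Z r) = 0) /\
  (forall th, 0 < th <= 2 * PI ->
     dnu_0 (radial Z) th + alpha * radial Z 0 th = 0 /\
     dnu_a a (radial Z) th + alpha * radial Z a th = 0).

(* Write p = psi'/psi and w = (psi z)'/psi, so that the ODE for z reads w' = B z.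
   Where it holds, the energy psi z z' has derivative psi z'^2 + psi (B - p') z^2 >= 0
   because B > p'.  The energy is negative at a and positive just after 0, which
   rules out zeros of z on (0, R1) and (R2, a]; hence z > 0 on (0, a] and Z is
   invertible on [0, a].  The first integral H = B Z - w is constant on the two ODE
   intervals, so f(y) = H(Z^-1 y) - B y is C^1 (constant near the ends), and
   f(Z) = -w = -Delta Z.  Finally Z(0) = 0 and alpha Z(a) = -beta reduce the boundary
   functional to La (alpha beta^2 - beta) < 0. *)

From Stdlib Require Import Reals Lra ClassicalEpsilon Ranalysis5.
From Coquelicot Require Import Coquelicot.
Open Scope R_scope.

Lemma continuous_Rplus_comp (f g : R -> R) x :
  continuous f x -> continuous g x -> continuous (fun t => f t + g t) x.
Proof. apply (continuous_plus f g). Qed.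

Lemma continuous_Rminus_comp (f g : R -> R) x :
  continuous f x -> continuous g x -> continuous (fun t => f t - g t) x.
Proof. apply (continuous_minus f g). Qed.

Lemma continuous_Rmult_comp (f g : R -> R) x :
  continuous f x -> continuous g x -> continuous (fun t => f t * g t) x.
Proof. apply (continuous_mult f g). Qed.

Lemma locally_pos_of_continuous (f : R -> R) x :
  continuous f x -> 0 < f x -> locally x (fun y => 0 < f y).
Proof.
  intros f_cont fx_pos.
  apply continuity_pt_filterlim in f_cont.
  generalize (proj1 (continuity_pt_locally f x) f_cont (mkposreal _ fx_pos)).
  apply filter_imp; intros y Hy; simpl in Hy.
  apply Rabs_lt_between in Hy; lra.
Qed.

Lemma continuity_of_ex_derive (f : R -> R) :
  (forall x, ex_derive f x) -> continuity f.
Proof.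
  intros f_der x; apply continuity_pt_filterlim, (ex_derive_continuous f), f_der.
Qed.

Lemma le_of_derive_nonneg (f df : R -> R) x y : x <= y ->
  (forall c, x <= c <= y -> is_derive f c (df c)) ->
  (forall c, x < c < y -> 0 <= df c) -> f x <= f y.
Proof.
  intros Hxy f_der df_nonneg.
  destruct (Req_dec x y) as [<-|x_neq_y]; [lra|].
  destruct (MVT_cor2 f df x y) as [c [Hc Hcxy]]; [lra|intros; apply is_derive_Reals; auto|].
  specialize (df_nonneg c Hcxy); nra.
Qed.

Lemma lt_of_derive_pos (f df : R -> R) x y : x < y ->
  (forall c, x <= c <= y -> is_derive f c (df c)) ->
  (forall c, x < c < y -> 0 < df c) -> f x < f y.
Proof.
  intros Hxy f_der df_pos.
  destruct (MVT_cor2 f df x y) as [c [Hc Hcxy]]; [lra|intros; apply is_derive_Reals; auto|].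
  specialize (df_pos c Hcxy); nra.
Qed.

Lemma eq_of_derive_zero (f df : R -> R) x y : x <= y ->
  (forall c, x <= c <= y -> is_derive f c (df c)) ->
  (forall c, x < c < y -> df c = 0) -> f x = f y.
Proof.
  intros Hxy f_der df_zero.
  destruct (Req_dec x y) as [<-|x_neq_y]; [lra|].
  destruct (MVT_cor2 f df x y) as [c [Hc Hcxy]]; [lra|intros; apply is_derive_Reals; auto|].
  rewrite df_zero in Hc by exact Hcxy; lra.
Qed.

Lemma is_derive_locally_const (g : R -> R) (c : R) (lo hi : Rbar) (t : R) :
  Rbar_lt lo t -> Rbar_lt t hi ->
  (forall s : R, Rbar_lt lo s -> Rbar_lt s hi -> g s = c) -> is_derive g t 0.
Proof.
  intros Hlo Hhi g_const.
  apply (is_derive_ext_loc (fun _ => c)); [|exact (is_derive_const c t)].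
  apply (locally_interval _ t lo hi Hlo Hhi); intros s Hs1 Hs2; symmetry; auto.
Qed.

Lemma C1_at_of_derive_on (g dg : R -> R) (lo hi : Rbar) (y : R) :
  Rbar_lt lo y -> Rbar_lt y hi ->
  (forall t : R, Rbar_lt lo t -> Rbar_lt t hi -> is_derive g t (dg t)) ->
  continuous dg y -> ex_derive g y /\ continuous (Derive g) y.
Proof.
  intros Hlo Hhi g_der dg_cont; split; [exists (dg y); auto|].
  apply (continuous_ext_loc _ dg); [|exact dg_cont].
  apply (locally_interval _ y lo hi Hlo Hhi); intros t Ht1 Ht2.
  symmetry; apply is_derive_unique; auto.
Qed.

Lemma pos_of_energy_le_neg (z V : R -> R) x y : continuity z ->
  (forall c, x < c <= y -> z c = 0 -> V c = 0) ->
  (forall c, x < c <= y -> V c <= V y) -> V y < 0 -> 0 < z y ->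
  forall r, x < r <= y -> 0 < z r.
Proof.
  intros z_cont V_zero V_le Vy_neg zy_pos r Hr.
  destruct (Rlt_or_le 0 (z r)) as [|zr_nonpos]; [assumption|exfalso].
  destruct (Req_dec (z r) 0) as [zr0|zr0].
  - specialize (V_le r Hr); rewrite (V_zero r Hr zr0) in V_le; lra.
  - destruct (IVT z r y z_cont) as [c [Hc zc0]]; try lra.
    { destruct (Req_dec r y) as [->|]; lra. }
    specialize (V_le c ltac:(lra)); rewrite (V_zero c ltac:(lra) zc0) in V_le; lra.
Qed.

Lemma pos_of_energy_ge_pos (z V : R -> R) x y : continuity z ->
  (forall c, x <= c < y -> z c = 0 -> V c = 0) ->
  (forall c, x <= c < y -> V x <= V c) -> 0 < V x -> 0 < z x ->
  forall r, x <= r < y -> 0 < z r.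
Proof.
  intros z_cont V_zero V_ge Vx_pos zx_pos r Hr.
  destruct (Rlt_or_le 0 (z r)) as [|zr_nonpos]; [assumption|exfalso].
  destruct (Req_dec (z r) 0) as [zr0|zr0].
  - specialize (V_ge r Hr); rewrite (V_zero r Hr zr0) in V_ge; lra.
  - destruct (IVT (fun t => - z t) x r) as [c [Hc zc0]]; try lra.
    { apply continuity_opp, z_cont. }
    { destruct (Req_dec x r) as [->|]; lra. }
    specialize (V_ge c ltac:(lra)); rewrite (V_zero c ltac:(lra) ltac:(lra)) in V_ge; lra.
Qed.

Lemma pos_right_of_root (z : R -> R) x :
  (forall t, ex_derive z t) -> continuous (Derive z) x ->
  z x = 0 -> 0 < Derive z x ->
  exists e, 0 < e /\ forall r, x < r <= x + e -> 0 < z r /\ 0 < Derive z r.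
Proof.
  intros z_der z'_cont zx0 z'x_pos.
  destruct (locally_pos_of_continuous _ _ z'_cont z'x_pos) as [d z'_pos].
  assert (z'_pos_near : forall t, x <= t < x + d -> 0 < Derive z t).
  { intros t Ht; apply z'_pos.
    change (Rabs (t - x) < d); rewrite Rabs_right; lra. }
  pose proof (cond_pos d).
  exists (d / 2); split; [lra|intros r Hr; split].
  - rewrite <- zx0; apply (lt_of_derive_pos z (Derive z)); try lra.
    + intros c _; apply Derive_correct, z_der.
    + intros c Hc; apply z'_pos_near; lra.
  - apply z'_pos_near; lra.
Qed.

Definition clamp (lo hi y : R) : R := Rmax lo (Rmin y hi).

(* The inverse of [Z] on [[b, c]], extended by the constants [b] and [c]
   outside [[Z b, Z c]]. *)
Definition inverse_on (Z : R -> R) (b c y : R) : R :=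
  epsilon (inhabits b) (fun r => b <= r <= c /\ Z r = clamp (Z b) (Z c) y).

Section InverseOn.

Variables (Z z : R -> R) (b c : R).
Hypotheses (b_lt_c : b < c) (Z_derive : forall r, is_derive Z r (z r))
  (z_pos : forall r, b < r < c -> 0 < z r).

Let phi := inverse_on Z b c.

Lemma increasing_on x y : b <= x -> x < y -> y <= c -> Z x < Z y.
Proof.
  intros Hx Hxy Hy; apply (lt_of_derive_pos Z z); auto.
  intros t Ht; apply z_pos; lra.
Qed.

Lemma nondecreasing_on x y : b <= x -> x <= y -> y <= c -> Z x <= Z y.
Proof.
  intros Hx Hxy Hy; destruct (Req_dec x y) as [<-|]; [lra|].
  apply Rlt_le, increasing_on; lra.
Qed.

Lemma injective_on x y : b <= x <= c -> b <= y <= c -> Z x = Z y -> x = y.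
Proof.
  intros Hx Hy Zxy; destruct (Rtotal_order x y) as [Hlt|[Heq|Hgt]]; [|exact Heq|].
  - pose proof (increasing_on x y (proj1 Hx) Hlt (proj2 Hy)); lra.
  - pose proof (increasing_on y x (proj1 Hy) Hgt (proj2 Hx)); lra.
Qed.

Lemma inverse_on_spec y : b <= phi y <= c /\ Z (phi y) = clamp (Z b) (Z c) y.
Proof.
  unfold phi, inverse_on; apply epsilon_spec.
  assert (Zb_lt_Zc : Z b < Z c) by (apply increasing_on; lra).
  destruct (IVT_gen Z b c (clamp (Z b) (Z c) y)) as [r [Hr Zr]].
  - apply continuity_of_ex_derive; intro t; exists (z t); auto.
  - rewrite Rmin_left, Rmax_right by lra.
    unfold clamp, Rmax, Rmin; repeat destruct Rle_dec; lra.
  - rewrite Rmin_left, Rmax_right in Hr by lra; exists r; auto.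
Qed.

Lemma inverse_on_cancel r : b <= r <= c -> phi (Z r) = r.
Proof.
  intros Hr; destruct (inverse_on_spec (Z r)) as [Hphi Zphi].
  apply injective_on; auto; rewrite Zphi.
  pose proof (nondecreasing_on b r (Rle_refl b) (proj1 Hr) (proj2 Hr)).
  pose proof (nondecreasing_on r c (proj1 Hr) (proj2 Hr) (Rle_refl c)).
  unfold clamp, Rmax, Rmin; repeat destruct Rle_dec; lra.
Qed.

Lemma inverse_on_lt r y : b < r <= c -> y < Z r -> phi y < r.
Proof.
  intros Hr Hy; destruct (inverse_on_spec y) as [Hphi Zphi].
  destruct (Rlt_or_le (phi y) r) as [|Hle]; [assumption|exfalso].
  pose proof (increasing_on b r (Rle_refl b) (proj1 Hr) (proj2 Hr)).
  pose proof (nondecreasing_on r (phi y) (Rlt_le _ _ (proj1 Hr)) Hle (proj2 Hphi)).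
  revert Zphi; unfold clamp, Rmax, Rmin; repeat destruct Rle_dec; lra.
Qed.

Lemma inverse_on_gt r y : b <= r < c -> Z r < y -> r < phi y.
Proof.
  intros Hr Hy; destruct (inverse_on_spec y) as [Hphi Zphi].
  destruct (Rlt_or_le r (phi y)) as [|Hle]; [assumption|exfalso].
  pose proof (increasing_on r c (proj1 Hr) (proj2 Hr) (Rle_refl c)).
  pose proof (nondecreasing_on (phi y) r (proj1 Hphi) Hle (Rlt_le _ _ (proj2 Hr))).
  revert Zphi; unfold clamp, Rmax, Rmin; repeat destruct Rle_dec; lra.
Qed.

Lemma is_derive_inverse_on y : Z b < y < Z c -> is_derive phi y (/ z (phi y)).
Proof.
  intros Hy.
  assert (Z_phi : forall x, Z b <= x <= Z c -> comp Z phi x = id x).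
  { intros x Hx; unfold comp, id; rewrite (proj2 (inverse_on_spec x)).
    unfold clamp, Rmax, Rmin; repeat destruct Rle_dec; lra. }
  assert (phi_cont : continuity_pt phi y).
  { apply (continuity_pt_recip_interv Z phi b c); auto.
    - exact increasing_on.
    - intros x _ _; apply inverse_on_spec.
    - intros t _; apply continuity_of_ex_derive; intro s; exists (z s); auto. }
  assert (Z_derivable : forall t, phi (Z b) <= t <= phi (Z c) -> derivable_pt Z t)
    by (intros t _; exists (z t); apply is_derive_Reals; auto).
  assert (phi_range : phi (Z b) <= phi y <= phi (Z c)).
  { rewrite !inverse_on_cancel by lra; apply inverse_on_spec. }
  assert (phi_y_interior : b < phi y < c).
  { split; [apply (inverse_on_gt b)|apply (inverse_on_lt c)]; lra. }
  assert (Z'_phi : derive_pt Z (phi y) (Z_derivable _ phi_range) = z (phi y))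
    by (apply derive_pt_eq_0, is_derive_Reals; auto).
  pose proof (z_pos _ phi_y_interior) as z_phi_pos.
  pose proof (derivable_pt_lim_recip_interv Z phi (Z b) (Z c) y Z_derivable phi_cont
                ltac:(lra) Hy phi_range Z_phi) as phi_der.
  rewrite Z'_phi in phi_der; apply is_derive_Reals.
  replace (/ z (phi y)) with (1 / z (phi y)) by (field; lra); apply phi_der; lra.
Qed.

End InverseOn.

Definition log_deriv (psi : R -> R) (s : R) : R := Derive psi s / psi s.

(* [(psi z)' / psi] is the divergence of the radial field [z d_r] for the metric
   [dr^2 + psi^2 dtheta^2]; for [z = Z'] it is the Laplacian of [Z]. *)
Definition radial_div (psi z : R -> R) (s : R) : R :=
  Derive (fun t => psi t * z t) s / psi s.

Definition radial_energy (psi z : R -> R) (s : R) : R := psi s * z s * Derive z s.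

Section RadialDivergence.

Variables psi z : R -> R.
Hypotheses (psi_C2 : C2_R psi) (z_C2 : C2_R z).

Let psi_der r : ex_derive psi r := proj1 (psi_C2 r).
Let psi'_der r : ex_derive (Derive psi) r := proj1 (proj2 (psi_C2 r)).
Let z_der r : ex_derive z r := proj1 (z_C2 r).
Let z'_der r : ex_derive (Derive z) r := proj1 (proj2 (z_C2 r)).

Lemma continuous_log_deriv r : 0 < psi r -> continuous (log_deriv psi) r.
Proof.
  intros psi_pos; apply continuous_Rmult_comp.
  - apply (ex_derive_continuous (Derive psi)), psi'_der.
  - apply continuous_Rinv_comp; [apply (ex_derive_continuous psi), psi_der|lra].
Qed.

Lemma log_deriv_C1 r : 0 < psi r ->
  ex_derive (log_deriv psi) r /\ continuous (Derive (log_deriv psi)) r.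
Proof.
  intros psi_pos.
  set (dp := fun s => (Derive (Derive psi) s * psi s - Derive psi s * Derive psi s) / psi s ^ 2).
  assert (p_der : forall s, 0 < psi s -> is_derive (log_deriv psi) s (dp s)).
  { intros s Hs; apply is_derive_div; try apply Derive_correct; auto; lra. }
  split; [exists (dp r); auto|].
  apply (continuous_ext_loc _ dp).
  - generalize (locally_pos_of_continuous psi r (ex_derive_continuous psi r (psi_der r)) psi_pos).
    apply filter_imp; intros s Hs; symmetry; apply is_derive_unique; auto.
  - assert (psi_cont : continuous psi r) by apply (ex_derive_continuous psi), psi_der.
    assert (psi'_cont : continuous (Derive psi) r)
      by apply (ex_derive_continuous (Derive psi)), psi'_der.
    unfold dp, Rdiv; apply continuous_Rmult_comp.
    + apply continuous_Rminus_comp; apply continuous_Rmult_comp; auto; apply psi_C2.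
    + apply continuous_Rinv_comp; [|apply pow_nonzero; lra].
      apply (continuous_ext (fun s => psi s * (psi s * 1))); [intros; simpl; ring|].
      repeat apply continuous_Rmult_comp; auto; apply continuous_const.
Qed.

Lemma radial_div_expand s : psi s <> 0 ->
  radial_div psi z s = log_deriv psi s * z s + Derive z s.
Proof.
  intros psi_nz; unfold radial_div, log_deriv; rewrite Derive_mult; auto; field; auto.
Qed.

Lemma is_derive_radial_div r : 0 < psi r ->
  is_derive (radial_div psi z) r
    (Derive (Derive z) r + Derive (log_deriv psi) r * z r + log_deriv psi r * Derive z r).
Proof.
  intros psi_pos.
  apply (is_derive_ext_loc (fun s => log_deriv psi s * z s + Derive z s)).
  - generalize (locally_pos_of_continuous psi r (ex_derive_continuous psi r (psi_der r)) psi_pos).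
    apply filter_imp; intros s Hs; symmetry; apply radial_div_expand; lra.
  - replace (Derive (Derive z) r + Derive (log_deriv psi) r * z r + log_deriv psi r * Derive z r)
      with ((Derive (log_deriv psi) r * z r + log_deriv psi r * Derive z r) + Derive (Derive z) r)
      by ring.
    apply (is_derive_plus (fun s => log_deriv psi s * z s) (Derive z));
      [|apply Derive_correct; auto].
    apply (is_derive_mult (log_deriv psi) z); [apply Derive_correct, log_deriv_C1; auto|
      apply Derive_correct; auto|intros; apply Rmult_comm].
Qed.

Lemma continuous_Derive_radial_div r : 0 < psi r ->
  continuous (Derive (radial_div psi z)) r.
Proof.
  intros psi_pos.
  apply (continuous_ext_loc _
           (fun s => Derive (Derive z) s + Derive (log_deriv psi) s * z s
                     + log_deriv psi s * Derive z s)).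
  - generalize (locally_pos_of_continuous psi r (ex_derive_continuous psi r (psi_der r)) psi_pos).
    apply filter_imp; intros s Hs; symmetry; apply is_derive_unique, is_derive_radial_div; lra.
  - apply continuous_Rplus_comp; [apply continuous_Rplus_comp|];
      try apply continuous_Rmult_comp.
    + apply z_C2.
    + apply log_deriv_C1; lra.
    + apply (ex_derive_continuous z), z_der.
    + apply continuous_log_deriv; lra.
    + apply (ex_derive_continuous (Derive z)), z'_der.
Qed.

(* The second derivative of [z] is eliminated through [radial_div], using
   [psi * log_deriv psi = psi']. *)
Lemma is_derive_radial_energy r : 0 < psi r ->
  is_derive (radial_energy psi z) r
    (psi r * Derive z r ^ 2
     + psi r * z r * (Derive (radial_div psi z) r - Derive (log_deriv psi) r * z r)).
Proof.
  intros psi_pos.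
  rewrite (is_derive_unique _ _ _ (is_derive_radial_div r psi_pos)).
  replace (psi r * Derive z r ^ 2 + psi r * z r * (Derive (Derive z) r
             + Derive (log_deriv psi) r * z r + log_deriv psi r * Derive z r
             - Derive (log_deriv psi) r * z r))
    with ((Derive psi r * z r + psi r * Derive z r) * Derive z r
          + psi r * z r * Derive (Derive z) r)
    by (unfold log_deriv; field; lra).
  apply (is_derive_mult (fun t => psi t * z t) (Derive z)); [|apply Derive_correct; auto|].
  - apply (is_derive_mult psi z); try apply Derive_correct; auto; intros; apply Rmult_comm.
  - intros; apply Rmult_comm.
Qed.

End RadialDivergence.

Section RadialSolution.

Variables (psi z : R -> R) (a R1 R2 B beta : R).
Hypotheses (psi_C2 : C2_R psi) (z_C2 : C2_R z)
  (psi_pos : forall r, 0 <= r <= a -> 0 < psi r)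
  (R1_pos : 0 < R1) (R1_lt_R2 : R1 < R2) (R2_lt_a : R2 < a)
  (beta_pos : 0 < beta)
  (log_deriv_lt_B : forall r, 0 <= r <= a -> Derive (log_deriv psi) r < B)
  (ode_left : forall r, 0 <= r < R1 -> Derive (radial_div psi z) r = B * z r)
  (z_0 : z 0 = 0) (z'_0 : Derive z 0 = 1)
  (ode_right : forall r, R2 < r <= a -> Derive (radial_div psi z) r = B * z r)
  (z_a : z a = beta) (z'_a : Derive z a = -1)
  (z_mid_pos : forall r, R1 <= r <= R2 -> 0 < z r).

Let z_der r : ex_derive z r := proj1 (z_C2 r).
Let z_continuity : continuity z := continuity_of_ex_derive z z_der.

Lemma radial_energy_nondecreasing x y : x <= y ->
  (0 <= x /\ y < R1) \/ (R2 < x /\ y <= a) ->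
  radial_energy psi z x <= radial_energy psi z y.
Proof.
  intros Hxy Hode.
  apply (le_of_derive_nonneg _ (fun r => psi r * Derive z r ^ 2
     + psi r * z r * (Derive (radial_div psi z) r - Derive (log_deriv psi) r * z r))); auto.
  - intros c Hc; apply is_derive_radial_energy; auto; apply psi_pos; lra.
  - intros c Hc.
    assert (Hpsi : 0 < psi c) by (apply psi_pos; lra).
    assert (Hode_c : Derive (radial_div psi z) c = B * z c)
      by (destruct Hode; [apply ode_left|apply ode_right]; lra).
    assert (HB : Derive (log_deriv psi) c < B) by (apply log_deriv_lt_B; lra).
    rewrite Hode_c.
    replace (psi c * Derive z c ^ 2 + psi c * z c * (B * z c - Derive (log_deriv psi) c * z c))
      with (psi c * Derive z c ^ 2 + psi c * (B - Derive (log_deriv psi) c) * z c ^ 2) by ring.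
    pose proof (pow2_ge_0 (Derive z c)); pose proof (pow2_ge_0 (z c)).
    apply Rplus_le_le_0_compat; apply Rmult_le_pos; nra.
Qed.

Lemma z_pos_right r : R2 < r <= a -> 0 < z r.
Proof.
  apply (pos_of_energy_le_neg z (radial_energy psi z) R2 a z_continuity).
  - intros c _ zc0; unfold radial_energy; rewrite zc0; ring.
  - intros c Hc; apply radial_energy_nondecreasing; lra.
  - unfold radial_energy; rewrite z_a, z'_a.
    pose proof (psi_pos a ltac:(lra)); nra.
  - lra.
Qed.

(* Near [0], [z(0) = 0 < z'(0)] makes the energy positive; it then stays
   positive up to [R1]. *)
Lemma z_pos_left r : 0 < r < R1 -> 0 < z r.
Proof.
  intros Hr.
  assert (z'_cont : continuous (Derive z) 0)
    by apply (ex_derive_continuous (Derive z)), z_C2.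
  destruct (pos_right_of_root z 0 z_der z'_cont z_0 ltac:(lra)) as [e [e_pos z_near]].
  set (e' := Rmin e (R1 / 2)).
  assert (He' : 0 < e' <= e /\ e' < R1).
  { unfold e'; split; [split; [apply Rmin_glb_lt|apply Rmin_l]; lra|].
    apply Rle_lt_trans with (R1 / 2); [apply Rmin_r|lra]. }
  destruct (Rle_or_lt r e') as [Hre|Hre]; [apply z_near; lra|].
  destruct (z_near e' ltac:(lra)) as [ze'_pos z'e'_pos].
  apply (pos_of_energy_ge_pos z (radial_energy psi z) e' R1 z_continuity); auto; try lra.
  - intros c _ zc0; unfold radial_energy; rewrite zc0; ring.
  - intros c Hc; apply radial_energy_nondecreasing; lra.
  - unfold radial_energy; pose proof (psi_pos e' ltac:(lra)).
    apply Rmult_lt_0_compat; [apply Rmult_lt_0_compat|]; assumption.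
Qed.

Lemma z_pos r : 0 < r <= a -> 0 < z r.
Proof.
  intros Hr; destruct (Rlt_or_le r R1); [apply z_pos_left; lra|].
  destruct (Rle_or_lt r R2); [apply z_mid_pos|apply z_pos_right]; lra.
Qed.

Let Z r := RInt z 0 r.

Lemma is_derive_primitive r : is_derive Z r (z r).
Proof.
  apply (is_derive_RInt z Z 0 r); [|apply (ex_derive_continuous z), z_der].
  apply filter_forall; intro b; apply (RInt_correct z 0 b), ex_RInt_continuous.
  intros t _; apply (ex_derive_continuous z), z_der.
Qed.

Let primitive_0 : Z 0 = 0.
Proof. apply (RInt_point 0 z). Qed.

Lemma primitive_increasing x y : 0 <= x -> x < y -> y <= a -> Z x < Z y.
Proof.
  apply (increasing_on Z z 0 a is_derive_primitive); intros r Hr; apply z_pos; lra.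
Qed.

Let a_pos : 0 < a.
Proof. lra. Qed.

Let z_pos_interior r : 0 < r < a -> 0 < z r.
Proof. intros; apply z_pos; lra. Qed.

Let phi := inverse_on Z 0 a.

Let phi_range t : 0 <= phi t <= a.
Proof. apply (inverse_on_spec Z z 0 a a_pos is_derive_primitive z_pos_interior). Qed.

Let first_integral r := B * Z r - radial_div psi z r.

Lemma is_derive_first_integral r : 0 <= r <= a ->
  is_derive first_integral r (B * z r - Derive (radial_div psi z) r).
Proof.
  intros Hr; apply (is_derive_minus (fun s => B * Z s)).
  - apply is_derive_scal, is_derive_primitive.
  - apply Derive_correct; eexists; apply is_derive_radial_div; auto.
Qed.

Lemma first_integral_const_left r : 0 <= r < R1 -> first_integral r = first_integral 0.
Proof.
  intros Hr; symmetry.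
  apply (eq_of_derive_zero _ (fun s => B * z s - Derive (radial_div psi z) s) 0 r); try lra.
  - intros c Hc; apply is_derive_first_integral; lra.
  - intros c Hc; rewrite ode_left by lra; ring.
Qed.

Lemma first_integral_const_right r : R2 < r <= a -> first_integral r = first_integral a.
Proof.
  intros Hr.
  apply (eq_of_derive_zero _ (fun s => B * z s - Derive (radial_div psi z) s) r a); try lra.
  - intros c Hc; apply is_derive_first_integral; lra.
  - intros c Hc; rewrite ode_right by lra; ring.
Qed.

(* Where the ODE holds, [first_integral] is constant, so [first_integral o phi]
   is constant below [Z R1] and above [Z R2]. *)
Lemma first_integral_inverse_C1 y :
  ex_derive (fun t => first_integral (phi t)) y /\
  continuous (Derive (fun t => first_integral (phi t))) y.
Proof.
  assert (ZR1_pos : Z 0 < Z R1) by (apply primitive_increasing; lra).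
  assert (ZR12 : Z R1 < Z R2) by (apply primitive_increasing; lra).
  assert (ZR2a : Z R2 < Z a) by (apply primitive_increasing; lra).
  destruct (Rlt_or_le y (Z R1)) as [Hy1|Hy1].
  { apply (C1_at_of_derive_on _ (fun _ => 0) m_infty (Z R1)); simpl; auto;
      [|apply continuous_const].
    intros t _ Ht; apply (is_derive_locally_const _ (first_integral 0) m_infty (Z R1));
      simpl; auto.
    intros s _ Hs; apply first_integral_const_left; split; [apply phi_range|].
    apply (inverse_on_lt Z z 0 a a_pos is_derive_primitive z_pos_interior); lra. }
  destruct (Rlt_or_le (Z R2) y) as [Hy2|Hy2].
  { apply (C1_at_of_derive_on _ (fun _ => 0) (Z R2) p_infty); simpl; auto;
      [|apply continuous_const].
    intros t Ht _; apply (is_derive_locally_const _ (first_integral a) (Z R2) p_infty);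
      simpl; auto.
    intros s Hs _; apply first_integral_const_right; split; [|apply phi_range].
    apply (inverse_on_gt Z z 0 a a_pos is_derive_primitive z_pos_interior); lra. }
  assert (phi_der : forall t, Z 0 < t < Z a -> is_derive phi t (/ z (phi t)))
    by exact (is_derive_inverse_on Z z 0 a a_pos is_derive_primitive z_pos_interior).
  apply (C1_at_of_derive_on _
           (fun t => / z (phi t) * (B * z (phi t) - Derive (radial_div psi z) (phi t)))
           (Z 0) (Z a)); simpl; try lra.
  - intros t Ht1 Ht2.
    apply (is_derive_comp first_integral phi t);
      [apply is_derive_first_integral, phi_range|apply phi_der; lra].
  - assert (phi_cont : continuous phi y)
      by (apply (ex_derive_continuous phi); eexists; apply phi_der; lra).
    assert (z_phi_pos : 0 < z (phi y)).
    { apply z_pos; split; [|apply phi_range].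
      apply (inverse_on_gt Z z 0 a a_pos is_derive_primitive z_pos_interior); lra. }
    assert (z_phi_cont : continuous (fun t => z (phi t)) y)
      by (apply (continuous_comp phi z); auto; apply (ex_derive_continuous z), z_der).
    apply continuous_Rmult_comp; [apply continuous_Rinv_comp; [exact z_phi_cont|lra]|].
    apply continuous_Rminus_comp.
    + apply (continuous_Rmult_comp (fun _ => B)); auto; apply continuous_const.
    + apply (continuous_comp phi (Derive (radial_div psi z))); auto.
      apply continuous_Derive_radial_div; auto; apply psi_pos, phi_range.
Qed.


Definition nonlinearity (y : R) : R := first_integral (phi y) - B * y.

Lemma nonlinearity_C1 : C1_R nonlinearity.
Proof.
  intro y.
  apply (C1_at_of_derive_on _
           (fun t => Derive (fun s => first_integral (phi s)) t - B) m_infty p_infty);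
    simpl; auto.
  - intros t _ _; apply (is_derive_minus _ (fun s => B * s)).
    + apply Derive_correct, first_integral_inverse_C1.
    + auto_derive; auto; ring.
  - apply continuous_Rminus_comp; [apply first_integral_inverse_C1|apply continuous_const].
Qed.

Lemma nonlinearity_primitive r : 0 <= r <= a -> nonlinearity (Z r) = - radial_div psi z r.
Proof.
  intros Hr; unfold nonlinearity, phi, first_integral.
  rewrite (inverse_on_cancel Z z 0 a a_pos is_derive_primitive z_pos_interior) by exact Hr.
  ring.
Qed.

Lemma primitive_stationary : stationary_solution psi a nonlinearity (- beta / Z a) Z.
Proof.
  assert (Derive_radial : forall th s, Derive (fun t => radial Z t th) s = z s)
    by (intros; apply is_derive_unique, is_derive_primitive).
  split; [|split].
  - intros r _; split; [eexists; apply is_derive_primitive|].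
    apply (ex_derive_ext z); [|apply z_der].
    intro t; symmetry; apply is_derive_unique, is_derive_primitive.
  - intros r th Hr _; unfold LB.
    rewrite (Derive_ext (fun s => Derive (fun t => radial Z t th) s) z r (Derive_radial th)).
    rewrite Derive_radial.
    rewrite (Derive_ext (fun t => Derive (fun s => radial Z r s) t) (fun _ => 0))
      by (intro t; apply (Derive_const (Z r))).
    pose proof (psi_pos r Hr).
    rewrite Derive_const, nonlinearity_primitive, radial_div_expand by (auto; lra).
    unfold log_deriv; field; lra.
  - intros th _; unfold dnu_0, dnu_a; rewrite !Derive_radial; unfold radial.
    rewrite primitive_0, z_0, z_a.
    pose proof (primitive_increasing 0 a ltac:(lra) a_pos ltac:(lra)) as Za_pos.
    rewrite primitive_0 in Za_pos; split; [ring|field; lra].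
Qed.

Lemma nonlinearity_boundary : nonlinearity (Z a) = 1 - log_deriv psi a * beta.
Proof.
  rewrite nonlinearity_primitive, radial_div_expand, z_a, z'_a by
    (auto; try lra; pose proof (psi_pos a ltac:(lra)); lra).
  ring.
Qed.

End RadialSolution.

Theorem lemma5p5
  (psi chi : R -> R) (r1 r2 a R1 R2 beta B : R) (z : R -> R)
  (* the profile curve *)
  (Hr : r1 <= 0 < a /\ a <= r2)
  (Hpsi_C2 : C2_R psi)
  (Hpsi_pos : forall r, r1 <= r <= r2 -> 0 < psi r)
  (Hchi_diff : forall r, ex_derive chi r)
  (Hunit : forall r, r1 <= r <= r2 ->
             (Derive psi r) ^ 2 + (Derive chi r) ^ 2 = 1)
  (Hsimple : forall r s, r1 <= r <= r2 -> r1 <= s <= r2 ->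
             psi r = psi s -> chi r = chi s -> r = s)
  (Hchi0 : 0 < Derive chi 0) (Hchia : 0 < Derive chi a)
  (* parameters *)
  (HR : 0 < R1 /\ R1 < R2 /\ R2 < a)
  (Hbeta : 0 < beta)
  (* B > Bbar = max_[0,a] |(psi'/psi)'| *)
  (HB : forall r, 0 <= r <= a ->
        Rabs (Derive (fun s => Derive psi s / psi s) r) < B)
  (* z = z_beta : smooth (C^2) on [0,a] *)
  (Hz_C2 : C2_R z)
  (* z = z1 on [0,R1) *)
  (Hz1 : forall r, 0 <= r < R1 ->
         Derive (fun s => Derive (fun t => psi t * z t) s / psi s) r
         - B * z r = 0)
  (Hz1_0 : z 0 = 0) (Hz1_0' : Derive z 0 = 1)
  (* z = z2 on (R2,a] *)
  (Hz2 : forall r, R2 < r <= a ->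
         Derive (fun s => Derive (fun t => psi t * z t) s / psi s) r
         - B * z r = 0)
  (Hz2_a : z a = beta) (Hz2_a' : Derive z a = -1)
  (* z = z3 > 0 on [R1,R2] *)
  (Hz3 : forall r, R1 <= r <= R2 -> 0 < z r) :
  let Z := fun r => RInt z 0 r in
  let alpha := - beta / RInt z 0 a in
  let L0 := 2 * PI * psi 0 in
  let La := 2 * PI * psi a in
  let Ha := - (Derive psi a / psi a) in
  let H0 := Derive psi 0 / psi 0 in
  exists f : R -> R,
    C1_R f /\
    stationary_solution psi a f alpha Z /\
    La * (Ha * alpha ^ 2 * (Z a) ^ 2 + alpha * Z a * f (Z a)
          + alpha ^ 3 * (Z a) ^ 2)
    + L0 * (H0 * alpha ^ 2 * (Z 0) ^ 2 + alpha * Z 0 * f (Z 0)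
          + alpha ^ 3 * (Z 0) ^ 2) < 0.
Proof.
  intros Z alpha L0 La Ha H0.
  destruct Hr as [[r1_nonpos a_pos] a_le_r2]; destruct HR as (R1_pos & R1_lt_R2 & R2_lt_a).
  assert (psi_pos : forall r, 0 <= r <= a -> 0 < psi r) by (intros; apply Hpsi_pos; lra).
  assert (B_bound : forall r, 0 <= r <= a -> Derive (log_deriv psi) r < B)
    by (intros r Hr; specialize (HB r Hr); apply Rabs_lt_between in HB; apply HB).
  assert (ode_left : forall r, 0 <= r < R1 -> Derive (radial_div psi z) r = B * z r)
    by (intros r Hr; apply Rminus_diag_uniq, Hz1, Hr).
  assert (ode_right : forall r, R2 < r <= a -> Derive (radial_div psi z) r = B * z r)
    by (intros r Hr; apply Rminus_diag_uniq, Hz2, Hr).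
  exists (nonlinearity psi z a B); split; [|split].
  - apply (nonlinearity_C1 psi z a R1 R2 B beta); assumption.
  - apply (primitive_stationary psi z a R1 R2 B beta); assumption.
  - unfold Z; rewrite (nonlinearity_boundary psi z a R1 R2 B beta) by assumption.
    assert (Z0 : RInt z 0 0 = 0) by apply (RInt_point 0 z).
    assert (Za_pos : RInt z 0 0 < RInt z 0 a)
      by (apply (primitive_increasing psi z a R1 R2 B beta); assumption || lra).
    rewrite Z0 in *.
    assert (alpha_neg : alpha < 0).
    { unfold alpha, Rdiv; rewrite <- Ropp_mult_distr_l.
      pose proof (Rmult_lt_0_compat _ _ Hbeta (Rinv_0_lt_compat _ Za_pos)); lra. }
    assert (La_pos : 0 < La)
      by (unfold La; pose proof PI_RGT_0; pose proof (psi_pos a ltac:(lra));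
          apply Rmult_lt_0_compat; [apply Rmult_lt_0_compat|]; lra).
    replace (La * _ + L0 * _) with (La * (alpha * beta ^ 2 - beta))
      by (unfold Ha, alpha, log_deriv; field; split; [lra|apply Rgt_not_eq, psi_pos; lra]).
    rewrite <- (Rmult_0_r La); apply Rmult_lt_compat_l; [exact La_pos|].
    pose proof (pow_lt beta 2 Hbeta); nra.
Qed.
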